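(* Let $\mathbb F_q$ be a finite field with $q$ elements, let $n\ge 2$, let $a_1,\dots,a_n,b\in\mathbb F_q^*$ and let $k,k_1,\dots,k_n,m_1,\dots,m_n$ be positive integers. Let $N_q$ be the number of solutions $(x_1,\dots,x_n)\in\mathbb F_q^n$ of $$(a_1x_1^{m_1}+\dots+a_nx_n^{m_n})^k=bx_1^{k_1}\cdots x_n^{k_n},$$ let $N_q(0)$ and $N_q^*(0)$ be the numbers of solutions of $a_1x_1^{m_1}+\dots+a_nx_n^{m_n}=0$ in $\mathbb F_q^n$ and in $(\mathbb F_q^* )^n$ respectively, and let $k_0=\gcd(k,k_1,\dots,k_n,q-1)$. If $b$ is not a $k_0$th power in $\mathbb F_q$, then $N_q=N_q(0)-N_q^*(0)$. If $b$ is a $k_0$th power in $\mathbb F_q$, then $$N_q=k_0(q-1)^{n-1}+N_q(0)-\frac{k_0+q-1}{q-1}\,N_q^*(0)+\sum_{\psi^{k_0}\ne\varepsilon}\psi(b)T(\psi),$$ where the sum is over all multiplicative characters $\psi$ of $\mathbb F_q$ whose order does not divide $k_0$.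
   Context: $\varepsilon$ denotes the trivial multiplicative character of $\mathbb F_q$. A multiplicative character $\psi$ is extended to $\mathbb F_q$ by $\psi(0)=1$ if $\psi$ is trivial and $\psi(0)=0$ otherwise. For a multiplicative character $\psi$, $$T(\psi)=\frac1{q-1}\sum_{\substack{x_1,\dots,x_n\in\mathbb F_q^*\\ a_1x_1^{m_1}+\dots+a_nx_n^{m_n}\ne0}}\psi^{k_1}(x_1)\cdots\psi^{k_n}(x_n)\,\bar\psi^{k}(a_1x_1^{m_1}+\dots+a_nx_n^{m_n}).$$ *)

From HB Require Import structures.
From mathcomp Require Import all_boot all_algebra all_fingroup all_solvable all_field all_character.
Set Implicit Arguments. Unset Strict Implicit. Unset Printing Implicit Defensive.
Import GRing.Theory Num.Theory.
Local Open Scope ring_scope.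

(* Multiplicative characters of F_q are the (linear = irreducible, the group
   being abelian) characters of the unit group [set: {unit F}]; they are
   indexed by Iirr (units_grp F), with index 0 the trivial character. *)
Definition units_grp (F : finFieldType) : {group {unit F}} := [set: {unit F}]%G.

Definition to_unit (F : finFieldType) (x : F) : {unit F} := insubd (1%g : {unit F}) x.

Definition mchar (F : finFieldType) (i : Iirr (units_grp F)) (x : F) : algC :=
  if x == 0 then (if i == 0 then 1 else 0) else 'chi_i (to_unit x).

Definition mcharX (F : finFieldType) (i : Iirr (units_grp F)) (j : nat) (x : F) : algC :=
  if x == 0 then (if 'chi_i ^+ j == 1 then 1 else 0) else ('chi_i ^+ j)%R (to_unit x).

Definition dform (F : finFieldType) (n : nat) (a : 'I_n -> F) (m : 'I_n -> nat)
  (x : {ffun 'I_n -> F}) : F := \sum_(i < n) a i * x i ^+ m i.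

Definition Tsum (F : finFieldType) (n : nat) (a : 'I_n -> F) (m kk : 'I_n -> nat)
  (k : nat) (i : Iirr (units_grp F)) : algC :=
  (#|F|.-1)%:R^-1 *
  \sum_(x : {ffun 'I_n -> F} | [forall j, x j != 0] && (dform a m x != 0))
     (\prod_(j < n) mcharX i (kk j) (x j)) * (mcharX i k (dform a m x))^*.

From HB Require Import structures.
From mathcomp Require Import all_boot all_algebra all_fingroup all_solvable all_field all_character.
From mathcomp Require Import ring.
Import GRing.Theory Num.Theory.
Local Open Scope ring_scope.

(* Points with a zero coordinate solve the equation exactly when the form
   L = a_1 x_1^m_1 + ... + a_n x_n^m_n vanishes, while points with all
   coordinates nonzero and L = 0 never do; this accounts for N_q(0) - N_q^*(0).
   On the points with all coordinates nonzero and L <> 0, orthogonality of the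
   multiplicative characters detects L^k = b x_1^k_1 ... x_n^k_n, so their
   number is the sum of psi(b) T(psi) over all psi.  Such a point exhibits b as
   the k0-th power of L^(k/k0) / prod x_i^(k_i/k0).  When b = y^k0, each of the
   k0 characters with psi^k0 = 1 (the unit group is cyclic of order q - 1, and
   k0 | q - 1) has psi(b) = 1 and T(psi) = ((q-1)^n - N_q^*(0)) / (q-1). *)

Lemma card_sum (T : finType) (A : {pred T}) : #|A| = (\sum_x (x \in A : nat))%N.
Proof. by rewrite -sum1_card big_mkcond. Qed.

Section LinearCharacters.

Variables (gT : finGroupType) (G : {group gT}).

Lemma sum_lin_char (xi : 'CF(G)) :
  xi \is a linear_char -> \sum_(x in G) xi x = #|G|%:R *+ (xi == 1).
Proof.
move=> lin_xi; have /irrP[j ->] := lin_char_irr lin_xi.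
have := cfdot_irr j 0; rewrite irr0 cfdotE -irr_eq1 => /(congr1 ( *%R #|G|%:R)).
rewrite mulVKf ?neq0CG // mulr_natr => <-.
by apply: eq_bigr => x Gx; rewrite cfun1E Gx conjC1 mulr1.
Qed.

Hypothesis abG : abelian G.

Lemma abelian_second_orthogonality x y : x \in G -> y \in G ->
  \sum_i 'chi[G]_i x * ('chi_i y)^* = #|G|%:R *+ (x == y).
Proof.
move=> Gx Gy; rewrite second_orthogonality_relation //.
rewrite (setIidPl _) ?sub_cent1 ?(subsetP abG) // (abelian_classP _ abG) //.
by rewrite inE eq_sym.
Qed.

Lemma card_irr_expr1 d :
  #|[set i : Iirr G | 'chi_i ^+ d == 1]| = #|('Ldiv_d(G))%g|.
Proof.
suff: #|G|%:R * #|[set i : Iirr G | 'chi_i ^+ d == 1]|%:R =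
      #|G|%:R * #|('Ldiv_d(G))%g|%:R :> algC.
  by move/(mulfI (neq0CG G))/eqP; rewrite eqr_nat => /eqP.
rewrite !mulr_natr [#|[set _ | _]|]card_sum [#|(_ :&: _)%g|]card_sum -!sumrMnr.
transitivity (\sum_i \sum_(x in G) ('chi[G]_i ^+ d) x).
  apply: eq_bigr => i _; rewrite sum_lin_char ?inE //.
  by apply/rpredX/char_abelianP.
rewrite exchange_big big_mkcond /=; apply: eq_bigr => x _.
rewrite !inE; case: ifP => Gx /=; last by rewrite mulr0n.
rewrite -abelian_second_orthogonality ?groupX ?group1 //; apply: eq_bigr => i _.
have lin_i := char_abelianP G abG i.
by rewrite exp_cfunE // -lin_charX // lin_char1 // conjC1 mulr1.
Qed.

End LinearCharacters.

Lemma card_Ldiv_cyclic (gT : finGroupType) (G : {group gT}) d :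
  cyclic G -> (d %| #|G|)%N -> #|('Ldiv_d(G))%g| = d.
Proof.
case/cyclicP=> g -> {G} dvd_d; set e := (#[g]%g %/ d)%N.
have def_og : #[g]%g = (e * d)%N by rewrite divnK.
have /andP[e_gt0 d_gt0] : (0 < e)%N && (0 < d)%N by rewrite -muln_gt0 -def_og.
have og_e : #[g ^+ e]%g = d by rewrite orderXdiv def_og ?dvdn_mulr ?mulKn.
rewrite -[RHS]og_e; apply: eq_card => u; rewrite !inE.
apply/idP/idP => [/andP[/cycleP[j ->]] | ge_u].
  rewrite -expgM -order_dvdn def_og dvdn_pmul2r // => /dvdnP[c ->].
  by rewrite mulnC expgM mem_cycle.
apply/andP; split; last by rewrite -order_dvdn -og_e order_dvdG.
by rewrite (subsetP (cycleX g e)).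
Qed.

Section MultiplicativeCharacters.

Context {F : finFieldType}.
Local Notation G := (units_grp F).

Lemma units_grp_abelian : abelian G.
Proof. exact/cyclic_abelian/field_unit_group_cyclic. Qed.

Lemma card_units_grp : #|G| = #|F|.-1.
Proof. exact: card_finField_unit. Qed.

Lemma natr_card_units_neq0 : (#|F|.-1)%:R != 0 :> algC.
Proof. by rewrite pnatr_eq0 -card_units_grp -lt0n cardG_gt0. Qed.

Lemma mem_units_grp (u : {unit F}) : u \in G.
Proof. by rewrite inE. Qed.

Lemma lin_mchar (i : Iirr G) : 'chi_i \is a linear_char.
Proof. exact/char_abelianP/units_grp_abelian. Qed.

Lemma to_unitK (x : F) : x != 0 -> val (to_unit x) = x.
Proof. by move=> x_nz; rewrite insubdK // unfold_in /= unitfE. Qed.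

Lemma to_unitM (x y : F) : x != 0 -> y != 0 ->
  to_unit (x * y) = (to_unit x * to_unit y)%g.
Proof.
by move=> x_nz y_nz; apply: val_inj; rewrite FinRing.val_unitM !to_unitK ?mulf_neq0.
Qed.

Lemma mchar_irr0 (x : F) : mchar 0 x = 1.
Proof. by rewrite /mchar eqxx irr0 cfun1E mem_units_grp if_same. Qed.

Lemma mcharM (i : Iirr G) : {morph mchar i : x y / x * y}.
Proof.
move=> x y; have [->|i_nz] := eqVneq i 0; first by rewrite !mchar_irr0 mulr1.
rewrite /mchar mulf_eq0 (negbTE i_nz).
have [x0|x_nz] /= := eqVneq x 0; first by rewrite mul0r.
have [y0|y_nz] /= := eqVneq y 0; first by rewrite mulr0.
by rewrite to_unitM // (lin_charM (lin_mchar i)) ?mem_units_grp.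
Qed.

Lemma mchar1 (i : Iirr G) : mchar i 1 = 1.
Proof.
rewrite /mchar oner_eq0 (_ : to_unit 1 = 1%g) ?(lin_char1 (lin_mchar i)) //.
by apply: val_inj; rewrite to_unitK ?oner_neq0.
Qed.

Lemma mchar_prod (i : Iirr G) (I : Type) (r : seq I) (P : pred I) (f : I -> F) :
  mchar i (\prod_(j <- r | P j) f j) = \prod_(j <- r | P j) mchar i (f j).
Proof. exact: (big_morph _ (mcharM i) (mchar1 i)). Qed.

Lemma mcharXn (i : Iirr G) (x : F) e : mchar i (x ^+ e) = mchar i x ^+ e.
Proof. by elim: e => [|e IHe]; rewrite ?mchar1 // !exprS mcharM IHe. Qed.

Lemma mcharXE (i : Iirr G) j (x : F) : x != 0 -> mcharX i j x = mchar i x ^+ j.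
Proof. by move=> x_nz; rewrite /mcharX /mchar (negbTE x_nz) exp_cfunE ?mem_units_grp. Qed.

Lemma mchar_expr1 (i : Iirr G) d e (x : F) :
  'chi_i ^+ d = 1 -> (d %| e)%N -> x != 0 -> mchar i x ^+ e = 1.
Proof.
move=> chi_d /dvdnP[c ->] x_nz; rewrite mulnC exprM -mcharXE //.
by rewrite /mcharX (negbTE x_nz) chi_d cfun1E mem_units_grp expr1n.
Qed.

Lemma mchar_orthogonality (x y : F) : x != 0 -> y != 0 ->
  \sum_i mchar i x * (mchar i y)^* = (#|F|.-1)%:R *+ (x == y).
Proof.
move=> x_nz y_nz; rewrite /mchar (negbTE x_nz) (negbTE y_nz).
rewrite abelian_second_orthogonality ?units_grp_abelian ?mem_units_grp //.
by rewrite card_units_grp -(inj_eq val_inj) !to_unitK.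
Qed.

Lemma card_mchar_expr1 d : (d %| #|F|.-1)%N ->
  #|[set i : Iirr G | 'chi_i ^+ d == 1]| = d.
Proof.
move=> dvd_d; rewrite card_irr_expr1 ?units_grp_abelian //.
by rewrite card_Ldiv_cyclic ?field_unit_group_cyclic ?card_units_grp.
Qed.

End MultiplicativeCharacters.

Arguments mchar_expr1 {F i d e x}.
Arguments card_mchar_expr1 {F d}.

Lemma root_of_expr_eq_mul_prod (R : fieldType) (I : finType) (z b : R) (x : I -> R)
    k (e : I -> nat) d :
  (d %| k)%N -> (forall j, d %| e j)%N -> (forall j, x j != 0) ->
  z ^+ k = b * \prod_j x j ^+ e j -> exists y, y ^+ d = b.
Proof.
move=> dvd_k dvd_e x_nz zk.
have prod_nz : \prod_j x j ^+ e j != 0 by apply/prodf_neq0 => j _; rewrite expf_neq0.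
exists (z ^+ (k %/ d)%N / \prod_j x j ^+ (e j %/ d)%N).
rewrite expr_div_n -prodrXl -exprM divnK // zk.
suff -> : \prod_j (x j ^+ (e j %/ d)%N) ^+ d = \prod_j x j ^+ e j by rewrite mulfK.
by apply: eq_bigr => j _; rewrite -exprM divnK.
Qed.

Section DiagonalEquation.

Context {F : finFieldType} {n : nat} {a : 'I_n -> F} {m : 'I_n -> nat}.
Context {b : F} {k : nat} {kk : 'I_n -> nat}.

Local Notation point := {ffun 'I_n -> F}.
Local Notation sol x := (dform a m x%R ^+ k == b * \prod_(i < n) x i ^+ kk i)%R.
Local Notation nz x := [forall i, x i != 0%R].

Lemma card_solutions_split : b != 0 -> (0 < k)%N -> (forall i, 0 < kk i)%N ->
  (#|[set x : point | sol x]| + #|[set x : point | nz x && (dform a m x == 0%R)]| =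
   #|[set x : point | dform a m x == 0%R]| +
   #|[set x : point | nz x && (dform a m x != 0%R) && sol x]|)%N.
Proof.
move=> b_nz k_gt0 kk_gt0; rewrite !card_sum -!big_split; apply: eq_bigr => x _.
rewrite !inE; case: (boolP (nz x)) => [/forallP x_nz | /forallPn[j /negPn/eqP xj0]] /=.
  have prod_nz : b * \prod_i x i ^+ kk i != 0.
    by rewrite mulf_neq0 //; apply/prodf_neq0 => i _; rewrite expf_neq0.
  have [->|_] := eqVneq (dform a m x) 0; last by case: (_ == _).
  by rewrite expr0n eqn0Ngt k_gt0 /= eq_sym (negbTE prod_nz).
rewrite (bigD1 j) //= xj0 expr0n eqn0Ngt kk_gt0 /= mul0r mulr0.
by rewrite expf_eq0 k_gt0 !addn0.
Qed.

Lemma card_nz_nonvanishing :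
  #|[set x : point | nz x && (dform a m x != 0)]|%:R =
  (#|F|.-1)%:R ^+ n - #|[set x : point | nz x && (dform a m x == 0)]|%:R :> algC.
Proof.
apply/eqP; rewrite eq_sym subr_eq -natrX -natrD eqr_nat eq_sym; apply/eqP.
transitivity #|[set x : point | nz x]|.
  rewrite !card_sum -big_split; apply: eq_bigr => x _; rewrite !inE.
  by case: (nz x); case: (dform a m x == 0).
rewrite -(cardC1 (0 : F)) -[X in (_ ^ X)%N]card_ord -card_ffun_on; apply: eq_card => x.
by rewrite inE; apply/forallP/ffun_onP.
Qed.

Lemma sum_mchar_Tsum : b != 0 ->
  \sum_i mchar i b * Tsum a m kk k i =
  #|[set x : point | nz x && (dform a m x != 0) && sol x]|%:R.
Proof.
move=> b_nz; transitivity ((#|F|.-1)%:R^-1 * \sum_(x : point | nz x && (dform a m x != 0))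
   \sum_i mchar i b * (\prod_j mcharX i (kk j) (x j) * (mcharX i k (dform a m x))^*)).
  by rewrite exchange_big mulr_sumr; apply: eq_bigr => i _; rewrite /Tsum mulrCA mulr_sumr.
rewrite card_sum natr_sum big_mkcond mulr_sumr /=; apply: eq_bigr => x _.
rewrite inE; case: ifP => [/andP[/forallP x_nz L_nz] | _] /=; last by rewrite mulr0.
have prod_nz : b * \prod_j x j ^+ kk j != 0.
  by rewrite mulf_neq0 //; apply/prodf_neq0 => j _; rewrite expf_neq0.
rewrite -[RHS](mulKf (@natr_card_units_neq0 F)) mulr_natr eq_sym.
rewrite -mchar_orthogonality ?expf_neq0 //.
congr (_ * _); apply: eq_bigr => i _.
rewrite mcharXE // -mcharXn mulrA mcharM mchar_prod; congr (_ * _ * _).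
by apply: eq_bigr => j _; rewrite mcharXE // mcharXn.
Qed.

Lemma Tsum_expr1 i d : 'chi_i ^+ d = 1 -> (d %| k)%N -> (forall j, d %| kk j)%N ->
  Tsum a m kk k i = (#|F|.-1)%:R^-1 *
    ((#|F|.-1)%:R ^+ n - #|[set x : point | nz x && (dform a m x == 0)]|%:R).
Proof.
move=> chi_d d_k d_kk; rewrite /Tsum -card_nz_nonvanishing card_sum natr_sum big_mkcond /=.
congr (_ * _); apply: eq_bigr => x _; rewrite inE.
case: ifP => [/andP[/forallP x_nz L_nz] | _] //.
rewrite big1 => [|j _]; last by rewrite mcharXE // (mchar_expr1 chi_d).
by rewrite mcharXE // (mchar_expr1 chi_d) // conjC1 mulr1.
Qed.

Lemma sum_mchar_Tsum_expr1 d (y : F) : y ^+ d = b -> y != 0 ->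
  (d %| #|F|.-1)%N -> (d %| k)%N -> (forall j, d %| kk j)%N ->
  \sum_(i | 'chi_i ^+ d == 1) mchar i b * Tsum a m kk k i = d%:R * ((#|F|.-1)%:R^-1 *
    ((#|F|.-1)%:R ^+ n - #|[set x : point | nz x && (dform a m x == 0)]|%:R)).
Proof.
move=> <- y_nz d_q1 d_k d_kk.
rewrite -[in RHS](card_mchar_expr1 d_q1) -sum1_card natr_sum mulr_suml.
apply: eq_big => [i | i /eqP chi_d]; first by rewrite inE.
by rewrite mcharXn (mchar_expr1 chi_d) // (Tsum_expr1 i d chi_d).
Qed.

End DiagonalEquation.

Theorem lemma1 (F : finFieldType) (n : nat) (a : 'I_n -> F) (b : F)
    (k : nat) (kk m : 'I_n -> nat) :
  (2 <= n)%N -> (forall i, a i != 0) -> b != 0 ->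
  (0 < k)%N -> (forall i, 0 < kk i)%N -> (forall i, 0 < m i)%N ->
  let q := #|F| in
  let Nq := #|[set x : {ffun 'I_n -> F} |
                 dform a m x ^+ k == b * \prod_(i < n) x i ^+ kk i]| in
  let N0 := #|[set x : {ffun 'I_n -> F} | dform a m x == 0]| in
  let N0s := #|[set x : {ffun 'I_n -> F} | [forall i, x i != 0] && (dform a m x == 0)]| in
  let k0 := gcdn k (gcdn (\big[gcdn/0%N]_(i < n) kk i) q.-1) in
  ((~ exists y : F, y ^+ k0 = b) -> Nq%:R = N0%:R - N0s%:R :> algC) /\
  ((exists y : F, y ^+ k0 = b) ->
     Nq%:R = k0%:R * (q.-1)%:R ^+ n.-1 + N0%:R
             - (k0 + q.-1)%:R / (q.-1)%:R * N0s%:R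
             + \sum_(i : Iirr (units_grp F) | 'chi_i ^+ k0 != 1) mchar i b * Tsum a m kk k i
       :> algC).
Proof.
move=> n_ge2 _ b_nz k_gt0 kk_gt0 _ q Nq N0 N0s k0.
have k0_k : (k0 %| k)%N := dvdn_gcdl _ _.
have k0_kk j : (k0 %| kk j)%N.
  by rewrite /k0 (dvdn_trans (dvdn_gcdr _ _)) // (dvdn_trans (dvdn_gcdl _ _)) ?(biggcdn_inf j).
have k0_q1 : (k0 %| q.-1)%N by rewrite /k0 (dvdn_trans (dvdn_gcdr _ _)) ?dvdn_gcdr.
have Nq_split : Nq%:R = N0%:R - N0s%:R +
    #|[set x : {ffun 'I_n -> F} | [forall i, x i != 0] && (dform a m x != 0) &&
        (dform a m x ^+ k == b * \prod_(i < n) x i ^+ kk i)]|%:R :> algC.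
  by apply/eqP; rewrite addrAC eq_sym subr_eq -!natrD eqr_nat card_solutions_split.
split=> [not_root | [y y_k0]]; rewrite Nq_split.
  rewrite (eq_card0 (_ : _ =i pred0)) ?addr0 // => x; rewrite !inE.
  apply/negP => /andP[/andP[/forallP x_nz _] /eqP sol_x]; apply: not_root.
  exact: root_of_expr_eq_mul_prod k0_k k0_kk x_nz sol_x.
have y_nz : y != 0.
  by apply: contra_neq b_nz => y0; rewrite -y_k0 y0 expr0n gtn_eqF ?gcdn_gt0 ?k_gt0.
rewrite -sum_mchar_Tsum // (bigID (fun i => 'chi_i ^+ k0 == 1)) /= addrC.
rewrite (sum_mchar_Tsum_expr1 k0 y y_k0) // natrD.
rewrite -[in (q.-1)%:R ^+ n](prednK (ltnW n_ge2)) exprS.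
by field; apply: natr_card_units_neq0.
Qed.
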